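(* Under the standing assumptions, if $0\le a\le 1/4$ then $z(\theta)$ is negative and strictly increasing on $(\pi/2,\pi)$.
   Context: Standing assumptions: $a,b\in\mathbb{R}$ with $b>0$, $1+a+b>0$, $9-27a+b>0$, $2-8a+8a^2+ab\ne0$, $b+1-a\ne0$. Let $f^*(\zeta,\theta)=(\zeta+2\cos\theta)(2\zeta\cos\theta+1)+b\zeta-a(\zeta+2\cos\theta)^3$. Under these assumptions, for each $\theta\in(\pi/2,\pi)$ the polynomial $f^*(\cdot,\theta)$ has exactly one real zero in $(-1,1)$; denote it $w(\theta)$ (so $\zeta(\theta)=1/w(\theta)$). Define $\tau(\theta)=-w(\theta)-2\cos\theta$ and $z(\theta)=-\dfrac{w(\theta)}{\tau(\theta)^3}$ (i.e. $z=-1/(\zeta\tau^3)$). *)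

From Stdlib Require Import Reals Lra.
Open Scope R_scope.

Definition fstar (a b zeta theta : R) : R :=
  (zeta + 2 * cos theta) * (2 * zeta * cos theta + 1) + b * zeta
  - a * (zeta + 2 * cos theta) ^ 3.

Definition standing (a b : R) : Prop :=
  b > 0 /\ 1 + a + b > 0 /\ 9 - 27 * a + b > 0 /\
  2 - 8 * a + 8 * a ^ 2 + a * b <> 0 /\ b + 1 - a <> 0.

Definition is_w (a b : R) (w : R -> R) : Prop :=
  forall theta, PI / 2 < theta < PI ->
    -1 < w theta < 1 /\ fstar a b (w theta) theta = 0.

Definition tau (w : R -> R) (theta : R) : R := - w theta - 2 * cos theta.

Definition zfun (w : R -> R) (theta : R) : R := - w theta / (tau w theta) ^ 3.

From Stdlib Require Import Reals Lra Psatz.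
Open Scope R_scope.

(* In the variables [S = -2 cos theta] and [t = tau], so that [w = S - t],
   the equation [f*(w, theta) = 0] becomes [h(S, t) = 0] for a cubic [h].
   For [0 <= a <= 1/4] the sign of [h] forces [0 < w] and [0 < t], hence
   [z < 0], and a difference identity for [h] shows that [t] increases
   with [S], i.e. with [theta].  Writing [w = p t^3], the equation becomes
   [g(t, p) = 0] with [g] increasing in both variables, so [p = -z]
   decreases as [t] increases. *)

Definition h_st (a b S t : R) : R :=
  t * S ^ 2 - t ^ 2 * S + b * S - (1 + b) * t + a * t ^ 3.

Lemma fstar_h_st a b w th :
  fstar a b w th = h_st a b (-2 * cos th) (- w - 2 * cos th).
Proof. unfold fstar, h_st; ring. Qed.

Lemma h_st_pos_of_tau_nonpos a b S t : 0 < b -> 0 <= a <= 1 ->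
  0 < S -> t <= 0 -> S - t < 1 -> 0 < h_st a b S t.
Proof.
  intros Hb Ha HS Ht Hw; unfold h_st.
  set (m := - t); assert (Hm : 0 <= m) by (unfold m; lra).
  replace t with (- m) by (unfold m; ring).
  (* [h = m (1 - S^2 - m S - a m^2) + b (S + m)] and [S^2 + m S + a m^2 <= (S + m)^2 < 1] *)
  assert (Hsq : S ^ 2 + m * S + a * m ^ 2 < 1).
  { assert (a * m ^ 2 <= m ^ 2) by nra.
    assert ((S + m) ^ 2 < 1) by (unfold m in *; nra).
    nra. }
  assert (0 <= m * (1 - S ^ 2 - m * S - a * m ^ 2)) by nra.
  assert (0 < b * (S + m)) by nra.
  nra.
Qed.

Lemma h_st_neg_of_w_nonpos a b S t : 0 <= b -> 0 <= a <= 1 / 4 ->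
  0 < S < 2 -> S - t <= 0 -> -1 < S - t -> h_st a b S t < 0.
Proof.
  intros Hb Ha HS Hw Hw1; unfold h_st.
  set (m := t - S); assert (Hm : 0 <= m < 1) by (unfold m; lra).
  replace t with (S + m) by (unfold m; ring).
  (* [h = -m t S - b m - t + a t^3], and [t^2 / 4 < 1 + m S] is [|S - m| < 2] *)
  assert (0 <= (S + m) ^ 3) by (apply pow_le; lra).
  assert (a * (S + m) ^ 3 <= (S + m) ^ 3 / 4) by nra.
  assert ((S + m) ^ 3 / 4 < (S + m) * (1 + m * S)) by nra.
  nra.
Qed.

Lemma h_st_root_pos a b S t : 0 < b -> 0 <= a <= 1 / 4 -> 0 < S < 2 ->
  -1 < S - t < 1 -> h_st a b S t = 0 -> 0 < S - t /\ 0 < t.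
Proof.
  intros Hb Ha HS Hw E.
  destruct (Rle_lt_dec t 0) as [Ht | Ht].
  { pose proof (h_st_pos_of_tau_nonpos a b S t); lra. }
  destruct (Rle_lt_dec (S - t) 0) as [Hw0 | Hw0].
  { pose proof (h_st_neg_of_w_nonpos a b S t); lra. }
  split; assumption.
Qed.

Lemma h_st_sub a b S1 S2 t1 t2 :
  h_st a b S2 t2 - h_st a b S1 t1 =
  (t2 - t1) * (S2 ^ 2 - (t1 + t2) * S2 - (1 + b) + a * (t1 ^ 2 + t1 * t2 + t2 ^ 2))
  + (S2 - S1) * (t1 * (S1 + S2 - t1) + b).
Proof. unfold h_st; ring. Qed.

Lemma h_st_cross_neg a b S t1 t2 : 0 <= b -> 0 <= a <= 1 / 3 ->
  0 < S - t1 -> t2 <= t1 -> S - t2 < 1 ->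
  S ^ 2 - (t1 + t2) * S - (1 + b) + a * (t1 ^ 2 + t1 * t2 + t2 ^ 2) < 0.
Proof.
  intros Hb Ha HA Ht HB.
  set (A := S - t1); set (B := S - t2).
  assert (Hid : S ^ 2 - (t1 + t2) * S + (t1 ^ 2 + t1 * t2 + t2 ^ 2) / 3
                = (A * A + A * B + B * B) / 3) by (unfold A, B; field).
  assert (A * A + A * B + B * B < 3) by (unfold A, B in *; nra).
  assert (0 <= t1 ^ 2 + t1 * t2 + t2 ^ 2) by nra.
  assert (a * (t1 ^ 2 + t1 * t2 + t2 ^ 2) <= (t1 ^ 2 + t1 * t2 + t2 ^ 2) / 3) by nra.
  lra.
Qed.

Lemma h_st_root_lt a b S1 S2 t1 t2 : 0 < b -> 0 <= a <= 1 / 3 ->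
  0 < t1 -> 0 < S1 - t1 -> S2 - t2 < 1 ->
  h_st a b S1 t1 = 0 -> h_st a b S2 t2 = 0 -> S1 < S2 -> t1 < t2.
Proof.
  intros Hb Ha Ht1 Hw1 Hw2 E1 E2 HS.
  destruct (Rlt_le_dec t1 t2) as [| Hle]; [assumption | exfalso].
  pose proof (h_st_sub a b S1 S2 t1 t2) as D; rewrite E1, E2 in D.
  pose proof (h_st_cross_neg a b S2 t1 t2) as Q.
  assert (0 < t1 * (S1 + S2 - t1) + b) by nra.
  nra.
Qed.

Definition g_tp (a b t p : R) : R :=
  p ^ 2 * t ^ 6 + p * t ^ 4 + (b * p + a) * t ^ 2 - 1.

Lemma h_st_g_tp a b t p : h_st a b (t + p * t ^ 3) t = t * g_tp a b t p.
Proof. unfold h_st, g_tp; ring. Qed.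

Lemma pow_lt_compat x y n : 0 < x < y -> 0 < x ^ S n < y ^ S n.
Proof.
  intros Hxy; split; [apply pow_lt; lra |].
  induction n as [| n IH]; [simpl; lra |].
  change (x * x ^ S n < y * y ^ S n).
  apply Rmult_le_0_lt_compat; try lra; apply pow_le; lra.
Qed.

Lemma g_tp_lt a b t1 t2 p1 p2 : 0 <= b -> 0 <= a ->
  0 < t1 < t2 -> 0 < p1 <= p2 -> g_tp a b t1 p1 < g_tp a b t2 p2.
Proof.
  intros Hb Ha Ht Hp; unfold g_tp.
  pose proof (pow_lt_compat t1 t2 1 Ht) as T2.
  pose proof (pow_lt_compat t1 t2 3 Ht) as T4.
  pose proof (pow_lt_compat t1 t2 5 Ht) as T6.
  assert (P2 : 0 < p1 ^ 2 <= p2 ^ 2) by (split; nra).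
  assert (p1 ^ 2 * t1 ^ 6 < p2 ^ 2 * t2 ^ 6) by nra.
  assert (p1 * t1 ^ 4 < p2 * t2 ^ 4) by nra.
  assert (0 <= b * p1 + a <= b * p2 + a) by (split; nra).
  assert ((b * p1 + a) * t1 ^ 2 <= (b * p2 + a) * t2 ^ 2)
    by (apply Rmult_le_compat; lra).
  lra.
Qed.

Lemma g_tp_root_anti a b t1 t2 p1 p2 : 0 <= b -> 0 <= a ->
  0 < t1 < t2 -> 0 < p1 ->
  g_tp a b t1 p1 = 0 -> g_tp a b t2 p2 = 0 -> p2 < p1.
Proof.
  intros Hb Ha Ht Hp E1 E2.
  destruct (Rlt_le_dec p2 p1) as [| Hle]; [assumption | exfalso].
  pose proof (g_tp_lt a b t1 t2 p1 p2); lra.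
Qed.

Lemma cos_open_second_quadrant th : PI / 2 < th < PI -> -1 < cos th < 0.
Proof.
  intros Hth; pose proof PI_RGT_0.
  split.
  - rewrite <- cos_PI; apply cos_decreasing_1; lra.
  - apply cos_lt_0; lra.
Qed.

Section Branch.

Variables (a b : R) (w : R -> R).
Hypotheses (Hb : 0 < b) (Ha : 0 <= a <= 1 / 4) (Hw : is_w a b w).

Lemma branch_h_st_root th : PI / 2 < th < PI ->
  h_st a b (-2 * cos th) (tau w th) = 0.
Proof. intros Hth; unfold tau; rewrite <- fstar_h_st; apply Hw, Hth. Qed.

Lemma branch_w_tau_pos th : PI / 2 < th < PI -> 0 < w th /\ 0 < tau w th.
Proof.
  intros Hth.
  pose proof (cos_open_second_quadrant th Hth).
  destruct (Hw th Hth) as [Hw1 _].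
  replace (w th) with (-2 * cos th - tau w th) by (unfold tau; ring).
  apply (h_st_root_pos a b); [lra | lra | lra | unfold tau in *; lra |].
  apply branch_h_st_root, Hth.
Qed.

Lemma branch_tau_increasing t1 t2 : PI / 2 < t1 -> t1 < t2 -> t2 < PI ->
  tau w t1 < tau w t2.
Proof.
  intros H1 H12 H2; pose proof PI_RGT_0.
  destruct (branch_w_tau_pos t1) as [Hw1 Ht1]; [lra |].
  destruct (Hw t2) as [Hw2 _]; [lra |].
  assert (cos t2 < cos t1) by (apply cos_decreasing_1; lra).
  apply (h_st_root_lt a b (-2 * cos t1) (-2 * cos t2)); unfold tau in *; try lra.
  - apply (branch_h_st_root t1); lra.
  - apply (branch_h_st_root t2); lra.
Qed.

Lemma branch_g_tp_root th : PI / 2 < th < PI ->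
  g_tp a b (tau w th) (- zfun w th) = 0.
Proof.
  intros Hth; destruct (branch_w_tau_pos th Hth) as [_ Ht].
  apply (Rmult_eq_reg_l (tau w th)); [| lra].
  rewrite <- h_st_g_tp, Rmult_0_r, <- (branch_h_st_root th Hth).
  f_equal; unfold zfun, tau in *; field; lra.
Qed.

Lemma branch_zfun_neg th : PI / 2 < th < PI -> zfun w th < 0.
Proof.
  intros Hth; destruct (branch_w_tau_pos th Hth).
  unfold zfun, Rdiv.
  assert (0 < / tau w th ^ 3) by (apply Rinv_0_lt_compat, pow_lt; lra).
  nra.
Qed.

End Branch.

Theorem mainTheorem15 (a b : R) (w : R -> R) :
  standing a b ->
  is_w a b w ->
  0 <= a <= 1 / 4 ->
  (forall theta, PI / 2 < theta < PI -> zfun w theta < 0) /\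
  (forall t1 t2, PI / 2 < t1 -> t1 < t2 -> t2 < PI -> zfun w t1 < zfun w t2).
Proof.
  intros [Hb _] Hw Ha.
  pose proof (branch_zfun_neg a b w Hb Ha Hw) as Hz.
  split; [exact Hz |].
  intros t1 t2 H1 H12 H2.
  assert (- zfun w t2 < - zfun w t1); [| lra].
  pose proof (branch_w_tau_pos a b w Hb Ha Hw t1 ltac:(lra)).
  pose proof (Hz t1 ltac:(lra)).
  apply (g_tp_root_anti a b (tau w t1) (tau w t2)); try lra.
  - pose proof (branch_tau_increasing a b w Hb Ha Hw t1 t2 H1 H12 H2); lra.
  - apply branch_g_tp_root; auto; lra.
  - apply branch_g_tp_root; auto; lra.
Qed.
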